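(* Read's space $\mathcal R=(c_0,|||\cdot|||)$ is weakly locally uniformly rotund: for every $x$ with $|||x|||=1$ and every sequence $(x_n)$ with $|||x_n|||=1$ and $|||x+x_n|||\to 2$, the sequence $(x_n)$ converges weakly to $x$.
   Context: Let $c_{00}(\mathbb Q)$ be the set of finitely supported sequences with rational coefficients, and let $(u_n)_{n\in\mathbb N}$ be a sequence in $c_{00}(\mathbb Q)$ which lists every element of $c_{00}(\mathbb Q)$ infinitely many times. Let $(a_n)_{n\in\mathbb N}$ be a strictly increasing sequence of positive integers with $a_n>\max\operatorname{supp} u_n$ and $a_n>\|u_n\|_1$ for every $n$. $(e_n)$ denotes the canonical unit vectors and $\langle x,y\rangle=\sum_n x_ny_n$. Read's norm on $c_0$ is $|||x||| = \|x\|_\infty + \sum_{n} 2^{-a_n^2}|\langle x, u_n - e_{a_n}\rangle|$, and Read's space is $\mathcal R=(c_0,|||\cdot|||)$ (real scalars). *)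

From Stdlib Require Import Reals QArith.
From Coquelicot Require Import Coquelicot.
Open Scope R_scope.

Definition seqR := nat -> R.

Definition in_c0 (x : seqR) : Prop := is_lim_seq x 0.

Definition in_c00Q (v : seqR) : Prop :=
  (exists N : nat, forall k, (N <= k)%nat -> v k = 0) /\
  (forall k, exists q : Q, v k = Q2R q).

Definition unit_vec (m : nat) : seqR := fun k => if Nat.eqb k m then 1 else 0.

Definition inner (x y : seqR) : R := Series (fun k => x k * y k).

Definition sup_norm (x : seqR) : R :=
  real (Lub_Rbar (fun r => exists k, r = Rabs (x k))).

Definition l1_norm (v : seqR) : R := Series (fun k => Rabs (v k)).

Definition seq_add (x y : seqR) : seqR := fun k => x k + y k.
Definition seq_scal (c : R) (x : seqR) : seqR := fun k => c * x k.
Definition seq_sub (x y : seqR) : seqR := fun k => x k - y k.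

Definition read_norm (u : nat -> seqR) (a : nat -> nat) (x : seqR) : R :=
  sup_norm x +
  Series (fun n => / 2 ^ (a n * a n) *
                   Rabs (inner x (seq_sub (u n) (unit_vec (a n))))).

Definition read_data (u : nat -> seqR) (a : nat -> nat) : Prop :=
  (forall n, in_c00Q (u n)) /\
  (forall v, in_c00Q v -> forall N, exists n, (N <= n)%nat /\ u n = v) /\
  (forall n, (0 < a n)%nat) /\
  (forall n, (a n < a (S n))%nat) /\
  (forall n k, u n k <> 0 -> (k < a n)%nat) /\
  (forall n, l1_norm (u n) < INR (a n)).

Definition bounded_linear_functional (u : nat -> seqR) (a : nat -> nat)
  (f : seqR -> R) : Prop :=
  (forall y z, in_c0 y -> in_c0 z -> f (seq_add y z) = f y + f z) /\
  (forall c y, in_c0 y -> f (seq_scal c y) = c * f y) /\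
  (exists C : R, forall y, in_c0 y -> Rabs (f y) <= C * read_norm u a y).

Definition weak_conv (u : nat -> seqR) (a : nat -> nat)
  (xs : nat -> seqR) (x : seqR) : Prop :=
  forall f, bounded_linear_functional u a f ->
    is_lim_seq (fun n => f (xs n)) (f x).

From Stdlib Require Import Reals QArith Qreals Lra Lia FunctionalExtensionality ClassicalEpsilon Classical.
From Coquelicot Require Import Coquelicot.
Open Scope R_scope.

(** Bounded functionals on [c_0] are represented by summable coefficient
    sequences, so a bounded sequence converges weakly as soon as it converges
    coordinatewise; by a diagonal argument it suffices to show that every
    coordinatewise limit [y] of a subsequence of [(x_n)] equals [x].

    As [|||x + x_n||| -> 2], the triangle inequality becomes asymptotically an
    equality in each term of Read's norm, so [<x, u_m - e_(a_m)>] and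
    [<y, u_m - e_(a_m)>] never have opposite signs.  Every [P e_k + Q e_j]
    (P, Q integers) occurs as some [u_m] with [a_m] arbitrarily large, where
    [x (a_m)] is negligible; after rescaling this says that every linear form
    positive at [(x_k, x_j)] is nonnegative at [(y_k, y_j)], hence [y = t x]
    with [t >= 0].  The sup norms of [x_n] then
    tend to [1 - t S], where [S] is the series part of [|||x|||]: this bounds
    [t |x_k|] and gives [t <= 1], while [|||x + x_n||| -> 2] gives [t >= 1]. *)

(** * Limits and series *)

Lemma is_lim_seq_epsilon (v : nat -> R) (l : R) : is_lim_seq v l <->
  forall eps, 0 < eps -> exists N, forall n, (N <= n)%nat -> Rabs (v n - l) < eps.
Proof.
  rewrite is_lim_seq_Reals. unfold Un_cv, Rdist.
  split; intros H e He; destruct (H e He) as [N HN]; exists N; intros n Hn; apply HN; lia.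
Qed.

Lemma Rle_of_forall_eps (A C : R) : (forall e, 0 < e -> 0 <= A + e * C) -> 0 <= A.
Proof.
  intros H. destruct (Rle_or_lt 0 A) as [|HA]; auto.
  set (e := - A / (2 * (Rabs C + 1))).
  assert (0 < Rabs C + 1) by (pose proof (Rabs_pos C); lra).
  assert (He : 0 < e) by (unfold e; apply Rdiv_lt_0_compat; lra).
  specialize (H e He).
  assert (e * C <= e * Rabs C) by (apply Rmult_le_compat_l; [lra | apply Rle_abs]).
  assert (e * (Rabs C + 1) = - A / 2) by (unfold e; field; lra).
  nra.
Qed.

Lemma sum_f_R0_ge_term (d : nat -> R) m n : (forall k, 0 <= d k) -> (m <= n)%nat ->
  d m <= sum_f_R0 d n.
Proof.
  intros Hd Hmn. induction n as [|n IH].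
  - replace m with 0%nat by lia. simpl. lra.
  - rewrite tech5. destruct (Nat.eq_dec m (S n)) as [->|Hne].
    + pose proof (cond_pos_sum d n Hd). lra.
    + pose proof (IH ltac:(lia)). pose proof (Hd (S n)). lra.
Qed.

Lemma sum_f_R0_finite_support (d : nat -> R) N : (forall k, (N < k)%nat -> d k = 0) ->
  forall n, (N <= n)%nat -> sum_f_R0 d n = sum_f_R0 d N.
Proof.
  intros H n Hn. induction n as [|n IH].
  - now replace N with 0%nat by lia.
  - destruct (Nat.eq_dec N (S n)) as [->|Hne]; [reflexivity|].
    rewrite tech5, IH, H by lia. ring.
Qed.

Lemma is_series_finite_support (d : nat -> R) N : (forall k, (N < k)%nat -> d k = 0) ->
  is_series d (sum_f_R0 d N).
Proof.
  intros H. rewrite is_series_Reals. intros e He. exists N. intros n Hn.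
  unfold Rdist. rewrite (sum_f_R0_finite_support d N H n) by lia.
  rewrite Rminus_diag, Rabs_R0. lra.
Qed.

Lemma sum_f_R0_indicator (z : nat -> R) k0 P M : (k0 <= M)%nat ->
  sum_f_R0 (fun k => z k * (if Nat.eqb k k0 then P else 0)) M = P * z k0.
Proof.
  intros H. induction M as [|M IH].
  - replace k0 with 0%nat by lia. simpl. ring.
  - rewrite tech5. destruct (Nat.eq_dec k0 (S M)) as [->|Hne].
    + rewrite sum_eq_R0, Nat.eqb_refl; [ring|].
      intros k Hk. destruct (Nat.eqb_spec k (S M)); [lia | ring].
    + rewrite IH by lia. destruct (Nat.eqb_spec (S M) k0); [lia | ring].
Qed.

Lemma is_lim_seq_sum_f_R0 (g : nat -> nat -> R) (h : nat -> R) M :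
  (forall m, is_lim_seq (fun n => g n m) (h m)) ->
  is_lim_seq (fun n => sum_f_R0 (g n) M) (sum_f_R0 h M).
Proof.
  intros H. induction M as [|M IH]; simpl; [apply H | apply is_lim_seq_plus'; auto].
Qed.

Lemma Series_ge_term (d : nat -> R) m : ex_series d -> (forall k, 0 <= d k) ->
  d m <= Series d.
Proof.
  intros E Hd. eapply Rle_trans; [apply (sum_f_R0_ge_term d m m Hd (le_n m))|].
  rewrite <- sum_n_Reals. apply is_lim_seq_incr_compare; [apply (Series_correct d E)|].
  intros n. rewrite sum_Sn. pose proof (Hd (S n)). unfold plus; simpl; lra.
Qed.

Lemma Series_nonneg (d : nat -> R) : ex_series d -> (forall k, 0 <= d k) -> 0 <= Series d.
Proof. intros E Hd. eapply Rle_trans; [apply (Hd 0%nat) | apply Series_ge_term; auto]. Qed.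

Lemma ex_series_of_bounded_sums (d : nat -> R) B : (forall k, 0 <= d k) ->
  (forall n, sum_f_R0 d n <= B) -> ex_series d.
Proof.
  intros Hd HB. apply ex_series_Reals_1, growing_cv.
  - intros n. rewrite tech5. pose proof (Hd (S n)). lra.
  - exists B. intros r [i ->]. apply HB.
Qed.

Lemma ex_series_dominated (c b : nat -> R) : ex_series b -> (forall m, Rabs (c m) <= b m) ->
  ex_series c.
Proof. intros Hb Hc. apply (ex_series_le c b); auto. Qed.

Lemma Series_tail_le (b c : nat -> R) M : ex_series b -> (forall m, Rabs (c m) <= b m) ->
  Rabs (Series c - sum_f_R0 c M) <= Series b - sum_f_R0 b M.
Proof.
  intros Hb Hc. assert (Ec := ex_series_dominated c b Hb Hc).
  rewrite (Series_incr_n c (S M)), (Series_incr_n b (S M)) by (auto; lia). simpl pred.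
  replace (sum_f_R0 c M + Series (fun k => c (S M + k)%nat) - sum_f_R0 c M)
    with (Series (fun k => c (S M + k)%nat)) by ring.
  replace (sum_f_R0 b M + Series (fun k => b (S M + k)%nat) - sum_f_R0 b M)
    with (Series (fun k => b (S M + k)%nat)) by ring.
  assert (Eb : ex_series (fun k => b (S M + k)%nat)) by (apply ex_series_incr_n; auto).
  eapply Rle_trans; [apply Series_Rabs|].
  - apply (ex_series_dominated _ (fun k => b (S M + k)%nat)); auto.
    intros n. rewrite Rabs_Rabsolu. apply Hc.
  - apply Series_le; auto. intros n; split; [apply Rabs_pos | apply Hc].
Qed.

Lemma is_lim_seq_Series_dominated (g : nat -> nat -> R) (h b : nat -> R) : ex_series b ->
  (forall n m, Rabs (g n m) <= b m) ->
  (forall m, is_lim_seq (fun n => g n m) (h m)) ->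
  is_lim_seq (fun n => Series (g n)) (Series h).
Proof.
  intros Hb Hg Hl.
  assert (Hh : forall m, Rabs (h m) <= b m).
  { intros m. assert (L := is_lim_seq_abs _ _ (Hl m)).
    assert (Hle : Rbar_le (Rbar_abs (h m)) (b m)).
    { eapply is_lim_seq_le; [| exact L | apply is_lim_seq_const]. intros n; apply Hg. }
    exact Hle. }
  apply is_lim_seq_epsilon. intros e He.
  pose proof (Series_correct b Hb) as Sb. rewrite is_series_Reals in Sb.
  destruct (Sb (e / 3)) as [M HM]; [lra|].
  specialize (HM M (le_n _)). unfold Rdist in HM. rewrite Rabs_minus_sym in HM.
  pose proof (Rle_abs (Series b - sum_f_R0 b M)).
  pose proof (is_lim_seq_sum_f_R0 g h M Hl) as LS. rewrite is_lim_seq_epsilon in LS.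
  destruct (LS (e / 3)) as [N HN]; [lra|].
  exists N. intros n Hn. specialize (HN n Hn).
  pose proof (Series_tail_le b (g n) M Hb (Hg n)).
  pose proof (Series_tail_le b h M Hb Hh).
  replace (Series (g n) - Series h) with
    ((Series (g n) - sum_f_R0 (g n) M) + (sum_f_R0 (g n) M - sum_f_R0 h M)
     - (Series h - sum_f_R0 h M)) by ring.
  eapply Rle_lt_trans; [apply Rabs_triang|].
  eapply Rle_lt_trans; [apply Rplus_le_compat_r, Rabs_triang|].
  rewrite Rabs_Ropp. lra.
Qed.

Lemma Rabs_plus_eq_mult_nonneg (p q : R) : Rabs p + Rabs q = Rabs (p + q) -> 0 <= p * q.
Proof. unfold Rabs. destruct (Rcase_abs p), (Rcase_abs q), (Rcase_abs (p + q)); intros; nra. Qed.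

Lemma Rmult_unit_interval_bounds (d r : R) : 0 <= d <= 1 -> - Rabs r <= d * r <= Rabs r.
Proof. intros Hd. unfold Rabs. destruct (Rcase_abs r); split; nra. Qed.

Lemma ex_series_geom_half (B : R) : ex_series (fun m => B * (/ 2) ^ m).
Proof.
  apply (@ex_series_scal_l R_AbsRing R_NormedModule B (fun m => (/ 2) ^ m)).
  apply ex_series_geom. rewrite Rabs_pos_eq; lra.
Qed.

Lemma Series_geom_half (B : R) : Series (fun m => B * (/ 2) ^ m) = 2 * B.
Proof. rewrite Series_scal_l, Series_geom by (rewrite Rabs_pos_eq; lra). field. Qed.

(** * Subsequences *)

Definition incr (phi : nat -> nat) : Prop := forall i, (phi i < phi (S i))%nat.

Lemma incr_ge (phi : nat -> nat) : incr phi -> forall i, (i <= phi i)%nat.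
Proof. intros H i. induction i as [|i IH]; [lia | specialize (H i); lia]. Qed.

Lemma incr_lt (phi : nat -> nat) : incr phi -> forall i j, (i < j)%nat -> (phi i < phi j)%nat.
Proof.
  intros H i j Hij. induction j as [|j IH]; [lia|].
  destruct (Nat.eq_dec i j) as [->|Hne]; [apply H|].
  specialize (H j). specialize (IH ltac:(lia)). lia.
Qed.

Lemma incr_comp (phi psi : nat -> nat) : incr phi -> incr psi -> incr (fun n => phi (psi n)).
Proof. intros Hphi Hpsi n. apply incr_lt; auto. Qed.

Fixpoint chain (pick : nat -> nat -> nat) (i : nat) : nat :=
  match i with
  | O => pick O O
  | S j => pick (S j) (S (chain pick j))
  end.

Lemma incr_extraction (P : nat -> nat -> Prop) :
  (forall i N, exists n, (N <= n)%nat /\ P i n) ->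
  exists phi, incr phi /\ forall i, P i (phi i).
Proof.
  intros H.
  assert (X : forall iN : nat * nat, {n | (snd iN <= n)%nat /\ P (fst iN) n}).
  { intros [i N]. apply constructive_indefinite_description, H. }
  set (pick := fun i N => proj1_sig (X (i, N))).
  assert (Hpick : forall i N, (N <= pick i N)%nat /\ P i (pick i N)).
  { intros i N. exact (proj2_sig (X (i, N))). }
  clearbody pick. exists (chain pick). split.
  - intros i. simpl. destruct (Hpick (S i) (S (chain pick i))). lia.
  - intros [|i]; apply Hpick.
Qed.

Lemma inv_INR_S_lt (e : R) : 0 < e -> exists N, forall n, (N <= n)%nat -> / INR (S n) < e.
Proof.
  intros He. pose proof is_lim_seq_INR as L. apply is_lim_seq_spec in L.
  destruct (L (/ e)) as [N HN]. exists N. intros n Hn.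
  assert (H1 : / e < INR (S n)) by (apply HN; lia).
  assert (0 < / e) by (apply Rinv_0_lt_compat; lra).
  rewrite <- (Rinv_inv e). apply Rinv_lt_contravar; [nra | exact H1].
Qed.

Lemma bolzano_weierstrass_subseq (v : nat -> R) B : (forall n, Rabs (v n) <= B) ->
  exists phi (l : R), incr phi /\ is_lim_seq (fun n => v (phi n)) l.
Proof.
  intros HB.
  destruct (Bolzano_Weierstrass v (fun c => - B <= c <= B) (compact_P3 _ _)) as [l Hl].
  { intros n. specialize (HB n). apply Rabs_le_between in HB. lra. }
  destruct (incr_extraction (fun i n => Rabs (v n - l) < / INR (S i))) as [phi [Hphi Hp]].
  { intros i N. apply (Hl (fun r => Rabs (r - l) < / INR (S i)) N).
    assert (Hpos : 0 < / INR (S i)) by (apply Rinv_0_lt_compat, lt_0_INR; lia).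
    exists (mkposreal _ Hpos). intros r Hr. exact Hr. }
  exists phi, l. split; auto. apply is_lim_seq_epsilon. intros e He.
  destruct (inv_INR_S_lt e He) as [N HN]. exists N. intros n Hn.
  eapply Rlt_trans; [apply Hp | apply HN; auto].
Qed.

Fixpoint nested (F : (nat -> nat) -> nat -> nat -> nat) (j : nat) : nat -> nat :=
  match j with
  | O => fun n => n
  | S j' => fun n => nested F j' (F (nested F j') j' n)
  end.

Section Nested.
Variable F : (nat -> nat) -> nat -> nat -> nat.
Hypothesis HF : forall psi k, incr (F psi k).

Lemma nested_incr j : incr (nested F j).
Proof.
  induction j as [|j IH]; intros i; simpl; [lia|]. apply incr_lt; [exact IH | apply HF].
Qed.

Lemma nested_refines (k d : nat) : exists rho, (forall n, (n <= rho n)%nat) /\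
  forall n, nested F (k + d)%nat n = nested F k (rho n).
Proof.
  induction d as [|d [rho [Hr He]]].
  - exists (fun n => n). split; [auto | intros n; now rewrite Nat.add_0_r].
  - set (G := F (nested F (k + d)) (k + d)).
    exists (fun n => rho (G n)). split.
    + intros n. pose proof (incr_ge G (HF _ _) n). specialize (Hr (G n)). lia.
    + intros n. replace (k + S d)%nat with (S (k + d)) by lia. apply He.
Qed.

End Nested.

(** Cantor's diagonal argument: [nested F (S k)] makes coordinate [k] converge
    along a subsequence of [nested F k], and the diagonal [n |-> nested F (S n) n]
    is eventually a subsequence of every [nested F (S k)]. *)
Lemma diagonal_extraction (z : nat -> nat -> R) B : (forall n k, Rabs (z n k) <= B) ->
  exists sigma (y : seqR), incr sigma /\ forall k, is_lim_seq (fun n => z (sigma n) k) (y k).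
Proof.
  intros HB.
  assert (X : forall p : (nat -> nat) * nat, {phi | incr phi /\
     exists l : R, is_lim_seq (fun n => z (fst p (phi n)) (snd p)) l}).
  { intros [psi k]. apply constructive_indefinite_description.
    destruct (bolzano_weierstrass_subseq (fun n => z (psi n) k) B) as [phi [l [H1 H2]]];
      [intros n; apply HB|].
    exists phi. split; [exact H1 | exists l; exact H2]. }
  set (F := fun psi k => proj1_sig (X (psi, k))).
  assert (HF : forall psi k, incr (F psi k) /\
     exists l : R, is_lim_seq (fun n => z (psi (F psi k n)) k) l).
  { intros psi k. exact (proj2_sig (X (psi, k))). }
  clearbody F. assert (HFincr : forall psi k, incr (F psi k)) by apply HF.
  exists (fun n => nested F (S n) n), (fun k => real (Lim_seq (fun n => z (nested F (S k) n) k))).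
  split.
  - intros n. change (nested F (S n) n < nested F (S n) (F (nested F (S n)) (S n) (S n)))%nat.
    apply incr_lt; [apply nested_incr, HFincr|].
    pose proof (incr_ge _ (HFincr (nested F (S n)) (S n)) (S n)). lia.
  - intros k. destruct (proj2 (HF (nested F k) k)) as [l Hl].
    change (is_lim_seq (fun n => z (nested F (S k) n) k) l) in Hl.
    rewrite (is_lim_seq_unique _ _ Hl). simpl.
    rewrite is_lim_seq_epsilon in *. intros e He. destruct (Hl e He) as [N HN].
    exists (max N k). intros n Hn.
    destruct (nested_refines F HFincr (S k) (n - k)) as [rho [Hr Hrho]].
    change (Rabs (z (nested F (S n) n) k - l) < e).
    replace (S n) with (S k + (n - k))%nat by lia. rewrite Hrho.
    apply HN. specialize (Hr n). lia.
Qed.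

Lemma coordinatewise_lim_of_subseq (z : nat -> seqR) (x : seqR) B :
  (forall n k, Rabs (z n k) <= B) ->
  (forall sigma (y : seqR), incr sigma -> (forall k, is_lim_seq (fun n => z (sigma n) k) (y k)) ->
     forall k, y k = x k) ->
  forall k, is_lim_seq (fun n => z n k) (x k).
Proof.
  intros HB Hsub k0. apply is_lim_seq_epsilon. intros e He. apply NNPP. intros Hno.
  assert (Hfar : forall (i N : nat), exists n, (N <= n)%nat /\ e <= Rabs (z n k0 - x k0)).
  { intros _ N. apply NNPP. intros H. apply Hno. exists N. intros n Hn.
    apply Rnot_le_lt. intros H2. apply H. exists n. split; auto. }
  destruct (incr_extraction _ Hfar) as [psi [Hpsi Hp]].
  destruct (diagonal_extraction (fun n k => z (psi n) k) B) as [sigma [y [Hs Hy]]];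
    [intros; apply HB|].
  pose proof (Hsub _ y (incr_comp psi sigma Hpsi Hs) Hy k0) as Hyk.
  specialize (Hy k0). rewrite is_lim_seq_epsilon in Hy. destruct (Hy e He) as [N HN].
  specialize (HN N (le_n _)). specialize (Hp (sigma N)). simpl in HN. rewrite Hyk in HN. lra.
Qed.

(** * The sup norm *)

Definition bounded_by (B : R) (z : seqR) : Prop := forall k, Rabs (z k) <= B.

Lemma Lub_Rbar_sup_norm (z : seqR) B : bounded_by B z ->
  Lub_Rbar (fun r => exists k, r = Rabs (z k)) = Finite (sup_norm z).
Proof.
  intros H. unfold sup_norm.
  destruct (Lub_Rbar_correct (fun r => exists k, r = Rabs (z k))) as [Hub Hlub].
  destruct (Lub_Rbar _) as [r| |]; simpl; auto.
  - exfalso. apply (Hlub B). intros r [k ->]. apply H.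
  - exfalso. exact (Hub (Rabs (z 0%nat)) (ex_intro _ 0%nat eq_refl)).
Qed.

Lemma sup_norm_ge (z : seqR) B k : bounded_by B z -> Rabs (z k) <= sup_norm z.
Proof.
  intros H. destruct (Lub_Rbar_correct (fun r => exists k, r = Rabs (z k))) as [Hub _].
  rewrite (Lub_Rbar_sup_norm z B H) in Hub. apply Hub. now exists k.
Qed.

Lemma sup_norm_le (z : seqR) C : bounded_by C z -> sup_norm z <= C.
Proof.
  intros H. destruct (Lub_Rbar_correct (fun r => exists k, r = Rabs (z k))) as [_ Hlub].
  rewrite (Lub_Rbar_sup_norm z C H) in Hlub. apply (Hlub C). intros r [k ->]. apply H.
Qed.

Lemma bounded_by_sup_norm (z : seqR) B : bounded_by B z -> bounded_by (sup_norm z) z.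
Proof. intros H k. eapply sup_norm_ge; eauto. Qed.

Lemma bounded_by_ge (z : seqR) B : bounded_by B z -> 0 <= B.
Proof. intros H. eapply Rle_trans; [apply Rabs_pos | apply (H 0%nat)]. Qed.

Lemma bounded_by_add (y z : seqR) B C : bounded_by B y -> bounded_by C z ->
  bounded_by (B + C) (seq_add y z).
Proof.
  intros Hy Hz k. unfold seq_add. eapply Rle_trans; [apply Rabs_triang|].
  pose proof (Hy k). pose proof (Hz k). lra.
Qed.

Lemma sup_norm_add_le (y z : seqR) B C : bounded_by B y -> bounded_by C z ->
  sup_norm (seq_add y z) <= sup_norm y + sup_norm z.
Proof.
  intros Hy Hz. apply sup_norm_le, bounded_by_add; eapply bounded_by_sup_norm; eauto.
Qed.

Lemma c0_bounded (z : seqR) : in_c0 z -> exists B, bounded_by B z.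
Proof.
  intros H. unfold in_c0 in H. rewrite is_lim_seq_epsilon in H.
  destruct (H 1) as [N HN]; [lra|].
  exists (1 + sum_f_R0 (fun k => Rabs (z k)) N). intros k.
  pose proof (cond_pos_sum (fun k => Rabs (z k)) N (fun k => Rabs_pos _)).
  destruct (Compare_dec.le_lt_dec k N) as [Hk|Hk].
  - pose proof (sum_f_R0_ge_term (fun k => Rabs (z k)) k N (fun k => Rabs_pos _) Hk). simpl in *. lra.
  - specialize (HN k ltac:(lia)). rewrite Rminus_0_r in HN. lra.
Qed.

Lemma c0_finite_support (z : seqR) N : (forall k, (N < k)%nat -> z k = 0) -> in_c0 z.
Proof.
  intros H. apply (is_lim_seq_ext_loc (fun _ => 0)); [|apply is_lim_seq_const].
  exists (S N). intros n Hn. symmetry. apply H. lia.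
Qed.

(** * Read's norm *)

Definition read_vec (u : nat -> seqR) (a : nat -> nat) (m : nat) : seqR :=
  seq_sub (u m) (unit_vec (a m)).

Definition read_weight (a : nat -> nat) (m : nat) : R := / 2 ^ (a m * a m).

Definition read_term (u : nat -> seqR) (a : nat -> nat) (z : seqR) (m : nat) : R :=
  read_weight a m * Rabs (inner z (read_vec u a m)).

Lemma read_norm_split (u : nat -> seqR) (a : nat -> nat) (z : seqR) :
  read_norm u a z = sup_norm z + Series (read_term u a z).
Proof. reflexivity. Qed.

Lemma read_weight_pos (a : nat -> nat) m : 0 < read_weight a m.
Proof. apply Rinv_0_lt_compat, pow_lt; lra. Qed.

Section ReadNorm.
Variables (u : nat -> seqR) (a : nat -> nat).
Hypothesis Hdata : read_data u a.

Lemma read_a_gt m : (m < a m)%nat.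
Proof.
  destruct Hdata as (_ & _ & Hpos & Hinc & _).
  induction m as [|m IH]; [apply Hpos | specialize (Hinc m); lia].
Qed.

Lemma inner_read_vec (z : seqR) m :
  inner z (read_vec u a m) = sum_f_R0 (fun k => z k * u m k) (a m) - z (a m).
Proof.
  destruct Hdata as (_ & _ & _ & _ & Hsupp & _).
  unfold inner, read_vec, seq_sub.
  assert (Hz : forall k, (a m < k)%nat -> z k * (u m k - unit_vec (a m) k) = 0).
  { intros k Hk. unfold unit_vec. destruct (Nat.eqb_spec k (a m)); [lia|].
    destruct (Req_dec (u m k) 0) as [E|E]; [rewrite E; ring|]. specialize (Hsupp m k E). lia. }
  rewrite (is_series_unique _ _ (is_series_finite_support _ (a m) Hz)).
  rewrite (tech11 _ (fun k => z k * u m k) (fun k => z k * unit_vec (a m) k)) by (intros; ring).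
  unfold unit_vec. rewrite sum_f_R0_indicator by lia. ring.
Qed.

Lemma inner_read_vec_lin (y z : seqR) p q m :
  inner (fun k => p * y k + q * z k) (read_vec u a m)
  = p * inner y (read_vec u a m) + q * inner z (read_vec u a m).
Proof.
  rewrite !inner_read_vec.
  rewrite (sum_eq _ (fun k => y k * u m k * p + z k * u m k * q)) by (intros; ring).
  rewrite sum_plus, <- !scal_sum. ring.
Qed.

Lemma inner_read_vec_add (y z : seqR) m :
  inner (seq_add y z) (read_vec u a m) = inner y (read_vec u a m) + inner z (read_vec u a m).
Proof.
  rewrite <- (Rmult_1_l (inner y _)), <- (Rmult_1_l (inner z _)), <- inner_read_vec_lin.
  f_equal. apply functional_extensionality. intros k. unfold seq_add. ring.
Qed.

Lemma inner_read_vec_le (z : seqR) B m : bounded_by B z ->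
  Rabs (inner z (read_vec u a m)) <= B * (INR (a m) + 1).
Proof.
  intros HB. pose proof (bounded_by_ge z B HB) as B0.
  destruct Hdata as (_ & _ & _ & _ & Hsupp & Hl1).
  assert (Hu : l1_norm (u m) = sum_f_R0 (fun k => Rabs (u m k)) (a m)).
  { apply is_series_unique, is_series_finite_support. intros k Hk.
    destruct (Req_dec (u m k) 0) as [E|E]; [rewrite E; apply Rabs_R0|].
    specialize (Hsupp m k E). lia. }
  specialize (Hl1 m). rewrite Hu in Hl1.
  assert (Rabs (sum_f_R0 (fun k => z k * u m k) (a m))
          <= B * sum_f_R0 (fun k => Rabs (u m k)) (a m)).
  { eapply Rle_trans; [apply sum_f_R0_triangle|]. rewrite scal_sum. apply sum_Rle.
    intros k _. rewrite Rabs_mult, Rmult_comm.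
    apply Rmult_le_compat_l; [apply Rabs_pos | apply HB]. }
  rewrite inner_read_vec. unfold Rminus.
  eapply Rle_trans; [apply Rabs_triang|]. rewrite Rabs_Ropp.
  pose proof (HB (a m)). pose proof (Rmult_le_compat_l B _ _ B0 (Rlt_le _ _ Hl1)). lra.
Qed.

Lemma read_weight_le m : read_weight a m * (INR (a m) + 1) <= (/ 2) ^ m.
Proof.
  pose proof (read_a_gt m) as Ha. unfold read_weight. set (A := a m) in *.
  rewrite pow_inv.
  assert (P1 : 2 ^ A * 2 ^ m <= 2 ^ (A * A)).
  { rewrite <- pow_add. apply Rle_pow; [lra | nia]. }
  assert (P2 : INR A + 1 <= 2 ^ A).
  { pose proof (Rle_pow_lin 1 A ltac:(lra)). replace (1 + 1) with 2 in * by ring. lra. }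
  assert (0 < 2 ^ A) by (apply pow_lt; lra).
  assert (0 < 2 ^ m) by (apply pow_lt; lra).
  assert (0 < 2 ^ (A * A)) by (apply pow_lt; lra).
  apply (Rmult_le_reg_r (2 ^ (A * A) * 2 ^ m)); [nra|].
  replace (/ 2 ^ (A * A) * (INR A + 1) * (2 ^ (A * A) * 2 ^ m)) with ((INR A + 1) * 2 ^ m)
    by (field; lra).
  replace (/ 2 ^ m * (2 ^ (A * A) * 2 ^ m)) with (2 ^ (A * A)) by (field; lra).
  nra.
Qed.

Lemma read_term_bounds (z : seqR) B m : bounded_by B z ->
  0 <= read_term u a z m <= B * (/ 2) ^ m.
Proof.
  intros HB. unfold read_term. pose proof (read_weight_pos a m). split.
  - apply Rmult_le_pos; [lra | apply Rabs_pos].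
  - pose proof (inner_read_vec_le z B m HB). pose proof (read_weight_le m).
    pose proof (bounded_by_ge z B HB).
    eapply Rle_trans; [apply Rmult_le_compat_l; [lra | eassumption]|].
    replace (read_weight a m * (B * (INR (a m) + 1)))
      with (B * (read_weight a m * (INR (a m) + 1))) by ring.
    apply Rmult_le_compat_l; auto.
Qed.

Lemma ex_series_read_term (z : seqR) B : bounded_by B z -> ex_series (read_term u a z).
Proof.
  intros HB. apply (ex_series_dominated _ (fun m => B * (/ 2) ^ m)); [apply ex_series_geom_half|].
  intros m. destruct (read_term_bounds z B m HB). rewrite Rabs_pos_eq; lra.
Qed.

Lemma Series_read_term_bounds (z : seqR) B : bounded_by B z ->
  0 <= Series (read_term u a z) <= 2 * B.
Proof.
  intros HB. split.
  - apply Series_nonneg; [eapply ex_series_read_term; eauto|].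
    intros m. apply (read_term_bounds z B m HB).
  - rewrite <- Series_geom_half. apply Series_le; [|apply ex_series_geom_half].
    intros m. apply (read_term_bounds z B m HB).
Qed.

Lemma read_norm_le_sup (z : seqR) B : bounded_by B z -> read_norm u a z <= 3 * sup_norm z.
Proof.
  intros HB. rewrite read_norm_split.
  pose proof (Series_read_term_bounds z _ (bounded_by_sup_norm z B HB)). lra.
Qed.

Lemma bounded_by_read_norm (z : seqR) : in_c0 z -> bounded_by (read_norm u a z) z.
Proof.
  intros Hz k. destruct (c0_bounded z Hz) as [B HB]. rewrite read_norm_split.
  pose proof (sup_norm_ge z B k HB). pose proof (Series_read_term_bounds z B HB). lra.
Qed.

Lemma read_norm_nonneg (z : seqR) : in_c0 z -> 0 <= read_norm u a z.
Proof. intros Hz. exact (bounded_by_ge z _ (bounded_by_read_norm z Hz)). Qed.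

End ReadNorm.

(** * Bounded linear functionals on [c_0] *)

Definition trunc (N : nat) (z : seqR) : seqR := fun k => if Nat.leb k N then z k else 0.

Lemma trunc_c0 N z : in_c0 (trunc N z).
Proof.
  apply (c0_finite_support _ N). intros k Hk. unfold trunc.
  destruct (Nat.leb_spec k N); [lia | auto].
Qed.

Lemma unit_vec_c0 m : in_c0 (unit_vec m).
Proof.
  apply (c0_finite_support _ m). intros k Hk. unfold unit_vec.
  destruct (Nat.eqb_spec k m); [lia | reflexivity].
Qed.

Lemma c0_scal c z : in_c0 z -> in_c0 (seq_scal c z).
Proof.
  intros Hz. unfold in_c0. replace (Finite 0) with (Rbar_mult c 0) by (simpl; f_equal; ring).
  apply is_lim_seq_scal_l, Hz.
Qed.

Lemma trunc_S N z :
  trunc (S N) z = seq_add (trunc N z) (seq_scal (z (S N)) (unit_vec (S N))).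
Proof.
  apply functional_extensionality. intros k. unfold trunc, seq_add, seq_scal, unit_vec.
  destruct (Nat.leb_spec k (S N)), (Nat.leb_spec k N), (Nat.eqb_spec k (S N));
    subst; try lia; ring.
Qed.

Section Functional.
Variables (u : nat -> seqR) (a : nat -> nat) (f : seqR -> R).
Hypothesis Hdata : read_data u a.
Hypothesis Hf : bounded_linear_functional u a f.

Lemma functional_trunc z N : f (trunc N z) = sum_f_R0 (fun k => z k * f (unit_vec k)) N.
Proof.
  destruct Hf as (Hadd & Hscal & _).
  induction N as [|N IH]; simpl.
  - rewrite <- Hscal by apply unit_vec_c0. f_equal.
    apply functional_extensionality. intros k. unfold trunc, seq_scal, unit_vec.
    destruct (Nat.leb_spec k 0), (Nat.eqb_spec k 0); subst; try lia; ring.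
  - rewrite trunc_S, Hadd, Hscal, IH by auto using trunc_c0, c0_scal, unit_vec_c0.
    reflexivity.
Qed.

Lemma functional_le : exists C, 0 <= C /\
  forall y, in_c0 y -> Rabs (f y) <= C * read_norm u a y.
Proof.
  destruct Hf as (_ & _ & C & HC). exists (Rabs C). split; [apply Rabs_pos|].
  intros y Hy. eapply Rle_trans; [apply HC; auto|].
  apply Rmult_le_compat_r; [apply read_norm_nonneg; auto | apply Rle_abs].
Qed.

(** Testing [f] on the sign pattern of its first coefficients shows
    [sum_{k <= N} |f e_k| <= 3 C]. *)
Lemma ex_series_abs_functional_coef : ex_series (fun k => Rabs (f (unit_vec k))).
Proof.
  destruct functional_le as [C [C0 HC]].
  apply (ex_series_of_bounded_sums _ (3 * C)); [intros; apply Rabs_pos|].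
  intros N. set (s := fun k => if Rle_dec 0 (f (unit_vec k)) then 1 else - (1)).
  assert (E : f (trunc N s) = sum_f_R0 (fun k => Rabs (f (unit_vec k))) N).
  { rewrite functional_trunc. apply sum_eq. intros i _. unfold s.
    destruct (Rle_dec 0 (f (unit_vec i))); [rewrite Rabs_pos_eq | rewrite Rabs_left]; lra. }
  assert (Hs : bounded_by 1 (trunc N s)).
  { intros k. unfold trunc, s. destruct (Nat.leb k N); [destruct (Rle_dec 0 (f (unit_vec k)))|];
      rewrite ?Rabs_Ropp, ?Rabs_R1, ?Rabs_R0; lra. }
  rewrite <- E. eapply Rle_trans; [apply Rle_abs|].
  eapply Rle_trans; [apply HC, trunc_c0|].
  eapply Rle_trans; [apply Rmult_le_compat_l; [auto | eapply read_norm_le_sup; eauto]|].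
  pose proof (sup_norm_le _ 1 Hs). nra.
Qed.

Lemma is_series_functional (z : seqR) : in_c0 z ->
  is_series (fun k => z k * f (unit_vec k)) (f z).
Proof.
  intros Hz. destruct functional_le as [C [C0 HC]]. destruct Hf as (Hadd & _ & _).
  rewrite is_series_Reals. intros e He.
  set (e' := e / (3 * C + 1)).
  assert (He' : 0 < e') by (unfold e'; apply Rdiv_lt_0_compat; lra).
  pose proof Hz as Hz'. unfold in_c0 in Hz'. rewrite is_lim_seq_epsilon in Hz'.
  destruct (Hz' e' He') as [N0 HN0]. exists N0. intros n Hn.
  set (tail := fun k => if Nat.leb k n then 0 else z k).
  assert (Htail : in_c0 tail).
  { apply (is_lim_seq_ext_loc z); auto. exists (S n). intros k Hk. unfold tail.
    destruct (Nat.leb_spec k n); [lia | auto]. }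
  assert (Ez : z = seq_add (trunc n z) tail).
  { apply functional_extensionality. intros k. unfold seq_add, trunc, tail.
    destruct (Nat.leb k n); ring. }
  assert (Ef : f z = sum_f_R0 (fun k => z k * f (unit_vec k)) n + f tail).
  { rewrite Ez at 1. rewrite Hadd, functional_trunc by (auto; apply trunc_c0). reflexivity. }
  unfold Rdist. rewrite Ef.
  replace (sum_f_R0 (fun k => z k * f (unit_vec k)) n
           - (sum_f_R0 (fun k => z k * f (unit_vec k)) n + f tail)) with (- f tail) by ring.
  rewrite Rabs_Ropp.
  assert (Hb : bounded_by e' tail).
  { intros k. unfold tail. destruct (Nat.leb_spec k n); [rewrite Rabs_R0; lra|].
    specialize (HN0 k ltac:(lia)). rewrite Rminus_0_r in HN0. lra. }
  eapply Rle_lt_trans; [apply HC; auto|].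
  eapply Rle_lt_trans; [apply Rmult_le_compat_l; [auto | eapply read_norm_le_sup; eauto]|].
  pose proof (sup_norm_le _ e' Hb).
  assert (C * (3 * sup_norm tail) <= C * (3 * e')) by (apply Rmult_le_compat_l; lra).
  assert (C * (3 * e') < e).
  { unfold e'. apply (Rmult_lt_reg_r (3 * C + 1)); [lra|].
    replace (C * (3 * (e / (3 * C + 1))) * (3 * C + 1)) with (3 * C * e) by (field; lra). nra. }
  lra.
Qed.

End Functional.

Lemma weak_conv_of_coordinatewise (u : nat -> seqR) (a : nat -> nat) (xs : nat -> seqR)
  (x : seqR) B : read_data u a ->
  (forall n, in_c0 (xs n)) -> (forall n, bounded_by B (xs n)) -> in_c0 x ->
  (forall k, is_lim_seq (fun n => xs n k) (x k)) -> weak_conv u a xs x.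
Proof.
  intros Hd Hc Hb Hx Hl f Hf.
  apply (is_lim_seq_ext (fun n => Series (fun k => xs n k * f (unit_vec k)))).
  { intros n. apply is_series_unique, (is_series_functional u a f Hd Hf), Hc. }
  rewrite <- (is_series_unique _ _ (is_series_functional u a f Hd Hf x Hx)).
  apply (is_lim_seq_Series_dominated _ _ (fun k => B * Rabs (f (unit_vec k)))).
  - apply (@ex_series_scal_l R_AbsRing R_NormedModule B).
    apply (ex_series_abs_functional_coef u a f Hd Hf).
  - intros n m. rewrite Rabs_mult. specialize (Hb n m).
    pose proof (Rabs_pos (f (unit_vec m))). nra.
  - intros m. apply is_lim_seq_mult'; [apply Hl | apply is_lim_seq_const].
Qed.

Lemma Q2R_inject_Z (z : Z) : Q2R (inject_Z z) = IZR z.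
Proof. unfold Q2R, inject_Z. simpl. field. Qed.

Lemma proportional_of_halfplane (x1 x2 y1 y2 : R) : x1 <> 0 ->
  (forall p q, p * x1 + q * x2 > 0 -> p * y1 + q * y2 >= 0) ->
  0 <= y1 / x1 /\ y2 = y1 / x1 * x2.
Proof.
  intros Hx1 H. split.
  - specialize (H (/ x1) 0). replace (/ x1 * x1 + 0 * x2) with 1 in H by (field; auto).
    replace (/ x1 * y1 + 0 * y2) with (y1 / x1) in H by (field; auto). lra.
  - assert (Hr : forall r, 0 <= r * (y1 / x1 * x2 - y2)).
    { intros r. apply (Rle_of_forall_eps _ (y1 / x1)). intros e He.
      specialize (H ((e + r * x2) / x1) (- r)).
      replace ((e + r * x2) / x1 * x1 + - r * x2) with e in H by (field; auto).
      replace ((e + r * x2) / x1 * y1 + - r * y2) with (r * (y1 / x1 * x2 - y2) + e * (y1 / x1))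
        in H by (field; auto).
      lra. }
    pose proof (Hr 1). pose proof (Hr (-1)). lra.
Qed.

(** * Coordinatewise limits when [|||x + x_n||| -> 2] *)

Section CoordinatewiseLimit.
Variables (u : nat -> seqR) (a : nat -> nat) (x : seqR) (zs : nat -> seqR) (y : seqR).
Hypothesis Hdata : read_data u a.
Hypothesis Hx : in_c0 x.
Hypothesis Hx1 : read_norm u a x = 1.
Hypothesis Hz : forall n, in_c0 (zs n).
Hypothesis Hz1 : forall n, read_norm u a (zs n) = 1.
Hypothesis Hlim : is_lim_seq (fun n => read_norm u a (seq_add x (zs n))) 2.
Hypothesis Hy : forall k, is_lim_seq (fun n => zs n k) (y k).

Let x_bounded : bounded_by 1 x.
Proof. rewrite <- Hx1. apply bounded_by_read_norm; auto. Qed.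

Let zs_bounded n : bounded_by 1 (zs n).
Proof. rewrite <- (Hz1 n). apply bounded_by_read_norm; auto. Qed.

Let sum_bounded n : bounded_by 2 (seq_add x (zs n)).
Proof. replace 2 with (1 + 1) by ring. apply bounded_by_add; auto. Qed.

Let y_bounded : bounded_by 1 y.
Proof.
  intros k. assert (Hle : Rbar_le (Rbar_abs (y k)) 1).
  { eapply is_lim_seq_le; [| apply is_lim_seq_abs, Hy | apply is_lim_seq_const].
    intros n. apply zs_bounded. }
  exact Hle.
Qed.

Definition gap n := 2 - read_norm u a (seq_add x (zs n)).

Lemma gap_lim : is_lim_seq gap 0.
Proof.
  unfold gap. replace 0 with (2 - 2) by ring.
  apply is_lim_seq_minus'; [apply is_lim_seq_const | exact Hlim].
Qed.

Definition read_defect n m := Rabs (inner x (read_vec u a m))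
  + Rabs (inner (zs n) (read_vec u a m)) - Rabs (inner (seq_add x (zs n)) (read_vec u a m)).

Lemma read_defect_nonneg n m : 0 <= read_defect n m.
Proof.
  unfold read_defect. rewrite inner_read_vec_add by auto.
  pose proof (Rabs_triang (inner x (read_vec u a m)) (inner (zs n) (read_vec u a m))). lra.
Qed.

Lemma ex_series_weighted_defect n : ex_series (fun m => read_weight a m * read_defect n m).
Proof.
  apply (ex_series_dominated _ (fun m => 4 * (/ 2) ^ m)); [apply ex_series_geom_half|].
  intros m. pose proof (read_defect_nonneg n m). pose proof (read_weight_pos a m).
  rewrite Rabs_pos_eq by nra.
  pose proof (read_term_bounds u a Hdata x 1 m x_bounded).
  pose proof (read_term_bounds u a Hdata (zs n) 1 m (zs_bounded n)).
  pose proof (read_term_bounds u a Hdata _ 2 m (sum_bounded n)).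
  unfold read_term, read_defect in *. nra.
Qed.

(** Both parts of Read's norm are subadditive, so the defect [gap n] of the
    triangle inequality splits into two nonnegative defects. *)
Lemma gap_split n : sup_norm x + sup_norm (zs n) - sup_norm (seq_add x (zs n))
  + Series (fun m => read_weight a m * read_defect n m) = gap n.
Proof.
  unfold gap. specialize (Hz1 n). rewrite !read_norm_split in *.
  assert (E : Series (fun m => read_weight a m * read_defect n m) =
     Series (read_term u a x) + Series (read_term u a (zs n))
     - Series (read_term u a (seq_add x (zs n)))).
  { pose proof (ex_series_read_term u a Hdata x 1 x_bounded).
    pose proof (ex_series_read_term u a Hdata (zs n) 1 (zs_bounded n)).
    pose proof (ex_series_read_term u a Hdata _ 2 (sum_bounded n)).
    rewrite <- Series_plus, <- Series_minus; auto.
    - apply Series_ext. intros m. unfold read_term, read_defect. ring.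
    - apply (@ex_series_plus R_AbsRing R_NormedModule); auto. }
  lra.
Qed.

Lemma sup_defect_le_gap n : sup_norm x + sup_norm (zs n) - sup_norm (seq_add x (zs n)) <= gap n.
Proof.
  rewrite <- gap_split.
  assert (0 <= Series (fun m => read_weight a m * read_defect n m)); [|lra].
  apply Series_nonneg; [apply ex_series_weighted_defect|]. intros m.
  pose proof (read_defect_nonneg n m). pose proof (read_weight_pos a m). nra.
Qed.

Lemma weighted_defect_le_gap n m : read_weight a m * read_defect n m <= gap n.
Proof.
  rewrite <- gap_split.
  pose proof (sup_norm_add_le x (zs n) 1 1 x_bounded (zs_bounded n)).
  assert (read_weight a m * read_defect n m
          <= Series (fun m => read_weight a m * read_defect n m)); [|lra].
  apply (Series_ge_term (fun k => read_weight a k * read_defect n k) m);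
    [apply ex_series_weighted_defect|]. intros k.
  pose proof (read_defect_nonneg n k). pose proof (read_weight_pos a k). nra.
Qed.

Lemma inner_read_vec_lim m :
  is_lim_seq (fun n => inner (zs n) (read_vec u a m)) (inner y (read_vec u a m)).
Proof.
  apply (is_lim_seq_ext (fun n => sum_f_R0 (fun k => zs n k * u m k) (a m) - zs n (a m))).
  { intros n. rewrite inner_read_vec by auto. reflexivity. }
  rewrite inner_read_vec by auto. apply is_lim_seq_minus'; [| apply Hy].
  apply (is_lim_seq_sum_f_R0 (fun n k => zs n k * u m k) (fun k => y k * u m k)).
  intros k. apply is_lim_seq_mult'; [apply Hy | apply is_lim_seq_const].
Qed.

(** The defects at a fixed [m] are at most [gap n / w_m], so they tend to [0]. *)
Lemma inner_read_vec_same_sign m : 0 <= inner x (read_vec u a m) * inner y (read_vec u a m).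
Proof.
  apply Rabs_plus_eq_mult_nonneg.
  set (al := inner x (read_vec u a m)). set (ga := inner y (read_vec u a m)).
  assert (L1 : is_lim_seq (fun n => read_defect n m) (Rabs al + Rabs ga - Rabs (al + ga))).
  { unfold read_defect.
    apply (is_lim_seq_ext (fun n => Rabs al + Rabs (inner (zs n) (read_vec u a m))
                                    - Rabs (al + inner (zs n) (read_vec u a m)))).
    { intros n. rewrite inner_read_vec_add by auto. reflexivity. }
    apply is_lim_seq_minus'; [apply is_lim_seq_plus'; [apply is_lim_seq_const|]|].
    - apply (is_lim_seq_abs _ ga), inner_read_vec_lim.
    - apply (is_lim_seq_abs _ (al + ga)).
      apply is_lim_seq_plus'; [apply is_lim_seq_const | apply inner_read_vec_lim]. }
  assert (L2 : is_lim_seq (fun n => read_defect n m) 0).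
  { pose proof (read_weight_pos a m).
    apply (is_lim_seq_le_le (fun _ => 0) _ (fun n => / read_weight a m * gap n)).
    - intros n. split; [apply read_defect_nonneg|].
      pose proof (weighted_defect_le_gap n m).
      apply (Rmult_le_reg_l (read_weight a m)); auto.
      rewrite <- Rmult_assoc, Rinv_r, Rmult_1_l; lra.
    - apply is_lim_seq_const.
    - replace (Finite 0) with (Rbar_mult (/ read_weight a m) 0) by (simpl; f_equal; ring).
      apply is_lim_seq_scal_l, gap_lim. }
  apply is_lim_seq_unique in L1. apply is_lim_seq_unique in L2.
  rewrite L1 in L2. injection L2. lra.
Qed.

(** [u_m = P e_k0 + Q e_j] for some [m] with [a_m] so large that [x (a_m)] is
    negligible; [y (a_m)] is only known to lie in [[-1, 1]]. *)
Lemma int_combination_test k0 j (P Q : Z) : IZR P * x k0 + IZR Q * x j > 0 ->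
  IZR P * y k0 + IZR Q * y j >= -1.
Proof.
  intros Hc.
  set (v := fun k => (if Nat.eqb k k0 then IZR P else 0) + (if Nat.eqb k j then IZR Q else 0)).
  assert (Hv : in_c00Q v).
  { split.
    - exists (S (max k0 j)). intros k Hk. unfold v.
      destruct (Nat.eqb_spec k k0), (Nat.eqb_spec k j); try lia; ring.
    - intros k.
      exists ((if Nat.eqb k k0 then inject_Z P else inject_Z 0)
              + (if Nat.eqb k j then inject_Z Q else inject_Z 0))%Q.
      rewrite Q2R_plus. unfold v. destruct (Nat.eqb k k0), (Nat.eqb k j); rewrite !Q2R_inject_Z; ring. }
  set (c := IZR P * x k0 + IZR Q * x j) in *.
  pose proof Hx as Hx0. unfold in_c0 in Hx0. rewrite is_lim_seq_epsilon in Hx0.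
  destruct (Hx0 c ltac:(lra)) as [N HN].
  destruct Hdata as (_ & Hlisted & _).
  destruct (Hlisted v Hv (max N (max k0 j))) as [m [Hm Huv]].
  pose proof (read_a_gt u a Hdata m) as Ham.
  assert (Hsum : forall z : seqR, sum_f_R0 (fun k => z k * u m k) (a m) = IZR P * z k0 + IZR Q * z j).
  { intros z. rewrite Huv. unfold v.
    rewrite (sum_eq _ (fun k => z k * (if Nat.eqb k k0 then IZR P else 0)
                               + z k * (if Nat.eqb k j then IZR Q else 0))) by (intros; ring).
    rewrite sum_plus, !sum_f_R0_indicator by lia. reflexivity. }
  pose proof (inner_read_vec_same_sign m) as Hsign.
  rewrite !inner_read_vec, !Hsum in Hsign by auto. fold c in Hsign.
  specialize (HN (a m) ltac:(lia)). rewrite Rminus_0_r in HN.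
  pose proof (Rle_abs (x (a m))). pose proof (y_bounded (a m)) as Hya.
  apply Rabs_le_between in Hya. nra.
Qed.

Lemma halfplane_test k0 j p q : p * x k0 + q * x j > 0 -> p * y k0 + q * y j >= 0.
Proof.
  intros Hc. apply Rnot_lt_ge. intros Hs.
  set (c := p * x k0 + q * x j) in *. set (s := p * y k0 + q * y j) in *.
  set (A := Rabs (x k0) + Rabs (x j)).
  assert (HA : 0 <= A) by (unfold A; pose proof (Rabs_pos (x k0)); pose proof (Rabs_pos (x j)); lra).
  set (lam := (A + 1) / c + 4 / (- s)).
  assert (Hlc : A + 1 <= lam * c).
  { assert (0 < 4 / (- s)) by (apply Rdiv_lt_0_compat; lra).
    replace (lam * c) with (A + 1 + 4 / (- s) * c) by (unfold lam; field; lra). nra. }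
  assert (Hls : 4 <= lam * (- s)).
  { assert (0 <= (A + 1) / c) by (apply Rdiv_le_0_compat; lra).
    replace (lam * (- s)) with ((A + 1) / c * (- s) + 4) by (unfold lam; field; lra). nra. }
  destruct (archimed (lam * p)) as [P1 P2]. destruct (archimed (lam * q)) as [Q1 Q2].
  set (d1 := IZR (up (lam * p)) - lam * p). set (d2 := IZR (up (lam * q)) - lam * q).
  assert (D1 : 0 <= d1 <= 1) by (unfold d1; lra).
  assert (D2 : 0 <= d2 <= 1) by (unfold d2; lra).
  assert (Ex : IZR (up (lam * p)) * x k0 + IZR (up (lam * q)) * x j = lam * c + d1 * x k0 + d2 * x j)
    by (unfold d1, d2, c; ring).
  assert (Ey : IZR (up (lam * p)) * y k0 + IZR (up (lam * q)) * y j = lam * s + d1 * y k0 + d2 * y j)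
    by (unfold d1, d2, s; ring).
  pose proof (Rmult_unit_interval_bounds d1 (x k0) D1).
  pose proof (Rmult_unit_interval_bounds d2 (x j) D2).
  pose proof (Rmult_unit_interval_bounds d1 (y k0) D1).
  pose proof (Rmult_unit_interval_bounds d2 (y j) D2).
  pose proof (y_bounded k0). pose proof (y_bounded j).
  assert (Hpos : IZR (up (lam * p)) * x k0 + IZR (up (lam * q)) * x j > 0) by (unfold A in *; lra).
  pose proof (int_combination_test k0 j _ _ Hpos). lra.
Qed.

Lemma x_nonzero : exists k, x k <> 0.
Proof.
  apply NNPP. intros H.
  assert (H0 : bounded_by 0 x).
  { intros k. destruct (Req_dec (x k) 0) as [E|E]; [rewrite E, Rabs_R0; lra|].
    exfalso. apply H. now exists k. }
  pose proof (read_norm_le_sup u a Hdata x 0 H0). pose proof (sup_norm_le x 0 H0). lra.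
Qed.

Lemma coordinatewise_limit_proportional : exists t, 0 <= t /\ forall j, y j = t * x j.
Proof.
  destruct x_nonzero as [k0 Hk0]. exists (y k0 / x k0). split.
  - apply (proportional_of_halfplane (x k0) (x k0) (y k0) (y k0) Hk0), halfplane_test.
  - intros j. apply (proportional_of_halfplane (x k0) (x j) (y k0) (y j) Hk0), halfplane_test.
Qed.

Definition window_error n N := sum_f_R0 (fun k => Rabs (zs n k - y k)) N.

Lemma window_error_lim N : is_lim_seq (fun n => window_error n N) 0.
Proof.
  unfold window_error. rewrite <- (sum_eq_R0 (fun _ => 0) N) by auto.
  apply (is_lim_seq_sum_f_R0 (fun n k => Rabs (zs n k - y k)) (fun _ => 0)). intros k.
  replace (Finite 0) with (Rbar_abs (y k - y k))
    by (simpl; f_equal; rewrite Rminus_diag, Rabs_R0; reflexivity).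
  apply is_lim_seq_abs, is_lim_seq_minus'; [apply Hy | apply is_lim_seq_const].
Qed.

Section Scale.
Variable t : R.
Hypothesis Ht : 0 <= t.
Hypothesis Hyt : forall j, y j = t * x j.

Lemma Series_read_term_lim :
  is_lim_seq (fun n => Series (read_term u a (zs n))) (t * Series (read_term u a x)).
Proof.
  rewrite <- Series_scal_l.
  apply (is_lim_seq_Series_dominated _ _ (fun m => 1 * (/ 2) ^ m)); [apply ex_series_geom_half| |].
  - intros n m. destruct (read_term_bounds u a Hdata (zs n) 1 m (zs_bounded n)).
    rewrite Rabs_pos_eq; lra.
  - intros m.
    replace (t * read_term u a x m) with (read_weight a m * Rabs (inner y (read_vec u a m))).
    + apply is_lim_seq_mult'; [apply is_lim_seq_const|].
      apply (is_lim_seq_abs _ (inner y (read_vec u a m))), inner_read_vec_lim.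
    + replace y with (fun k => t * x k + 0 * x k)
        by (apply functional_extensionality; intros k; rewrite Hyt; ring).
      rewrite inner_read_vec_lin, Rmult_0_l, Rplus_0_r, Rabs_mult, (Rabs_pos_eq t) by auto.
      unfold read_term. ring.
Qed.

Lemma sup_norm_lim : is_lim_seq (fun n => sup_norm (zs n)) (1 - t * Series (read_term u a x)).
Proof.
  apply (is_lim_seq_ext (fun n => 1 - Series (read_term u a (zs n)))).
  - intros n. specialize (Hz1 n). rewrite read_norm_split in Hz1. lra.
  - apply is_lim_seq_minus'; [apply is_lim_seq_const | exact Series_read_term_lim].
Qed.

(** [t x] is a coordinatewise limit of the [zs n], whose sup norms tend to [1 - t Sx]. *)
Lemma scale_le_one : t <= 1.
Proof.
  set (Sx := Series (read_term u a x)).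
  assert (Hsum : sup_norm x + Sx = 1) by (rewrite <- Hx1; reflexivity).
  destruct (Rle_or_lt t 0) as [|Htpos]; [lra|].
  assert (Hj : forall j, t * Rabs (x j) <= 1 - t * Sx).
  { intros j. assert (Hle : Rbar_le (Rbar_abs (y j)) (1 - t * Sx)).
    { eapply is_lim_seq_le; [| apply is_lim_seq_abs, Hy | exact sup_norm_lim].
      intros n. apply (sup_norm_ge (zs n) 1 j (zs_bounded n)). }
    simpl in Hle. rewrite Hyt, Rabs_mult, (Rabs_pos_eq t) in Hle by lra. exact Hle. }
  assert (Hsx : sup_norm x <= (1 - t * Sx) / t).
  { apply sup_norm_le. intros k. apply (Rmult_le_reg_l t); [lra|].
    replace (t * ((1 - t * Sx) / t)) with (1 - t * Sx) by (field; lra). apply Hj. }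
  apply (Rmult_le_compat_l t) in Hsx; [|lra].
  replace (t * ((1 - t * Sx) / t)) with (1 - t * Sx) in Hsx by (field; lra). nra.
Qed.

Lemma sup_norm_add_le_window N c n : (forall k, (N <= k)%nat -> Rabs (x k) < c) ->
  sup_norm (seq_add x (zs n))
  <= Rmax ((1 + t) * sup_norm x + window_error n N) (c + sup_norm (zs n)).
Proof.
  intros HN. apply sup_norm_le. intros k. unfold seq_add.
  pose proof (sup_norm_ge (zs n) 1 k (zs_bounded n)).
  destruct (Compare_dec.le_lt_dec N k) as [Hk|Hk].
  - specialize (HN k Hk).
    eapply Rle_trans; [apply Rabs_triang|]. eapply Rle_trans; [|apply Rmax_r]. lra.
  - replace (x k + zs n k) with ((1 + t) * x k + (zs n k - y k)) by (rewrite Hyt; ring).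
    eapply Rle_trans; [apply Rabs_triang|]. eapply Rle_trans; [|apply Rmax_l].
    rewrite Rabs_mult, (Rabs_pos_eq (1 + t)) by lra.
    pose proof (sup_norm_ge x 1 k x_bounded).
    pose proof (sum_f_R0_ge_term (fun k => Rabs (zs n k - y k)) k N (fun _ => Rabs_pos _)
      ltac:(lia)).
    unfold window_error. nra.
Qed.

(** Once [gap n < sx / 2], the sup norm of [x + zs n] can only be attained, up
    to [gap n], on the finite window where [|x k| >= sx / 2]; there [x + zs n]
    is close to [(1 + t) x]. *)
Lemma scale_ge_one : 1 <= t.
Proof.
  set (Sx := Series (read_term u a x)). set (sx := sup_norm x).
  assert (Hsum : sx + Sx = 1) by (rewrite <- Hx1; reflexivity).
  assert (Sx0 : 0 <= Sx) by apply (Series_read_term_bounds u a Hdata x 1 x_bounded).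
  destruct x_nonzero as [k0 Hk0].
  assert (Hsx : 0 < sx).
  { eapply Rlt_le_trans; [apply Rabs_pos_lt, Hk0 | apply (sup_norm_ge x 1 k0 x_bounded)]. }
  pose proof Hx as Hx0. unfold in_c0 in Hx0. rewrite is_lim_seq_epsilon in Hx0.
  destruct (Hx0 (sx / 2) ltac:(lra)) as [N HN].
  assert (HxN : forall k, (N <= k)%nat -> Rabs (x k) < sx / 2).
  { intros k Hk. specialize (HN k Hk). rewrite Rminus_0_r in HN. exact HN. }
  assert (Hev : eventually (fun n => sx + sup_norm (zs n) - gap n
                                     <= (1 + t) * sx + window_error n N)).
  { pose proof gap_lim as Hgap. rewrite is_lim_seq_epsilon in Hgap.
    destruct (Hgap (sx / 2) ltac:(lra)) as [M HM].
    exists M. intros n Hn. specialize (HM n Hn). rewrite Rminus_0_r in HM.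
    pose proof (Rle_abs (gap n)). pose proof (sup_defect_le_gap n) as Hdef. fold sx in Hdef.
    pose proof (sup_norm_add_le_window N (sx / 2) n HxN) as Hw. fold sx in Hw.
    unfold Rmax in Hw. destruct (Rle_dec _ _); lra. }
  assert (Hle : Rbar_le (sx + (1 - t * Sx) - 0) ((1 + t) * sx + 0)).
  { eapply is_lim_seq_le_loc; [exact Hev | |].
    - apply is_lim_seq_minus'; [|apply gap_lim].
      apply is_lim_seq_plus'; [apply is_lim_seq_const | exact sup_norm_lim].
    - apply is_lim_seq_plus'; [apply is_lim_seq_const | apply window_error_lim]. }
  simpl in Hle. nra.
Qed.

End Scale.

Lemma coordinatewise_limit_eq : forall k, y k = x k.
Proof.
  destruct coordinatewise_limit_proportional as [t [Ht Hyt]].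
  pose proof (scale_le_one t Ht Hyt). pose proof (scale_ge_one t Ht Hyt).
  intros k. rewrite Hyt. replace t with 1 by lra. ring.
Qed.

End CoordinatewiseLimit.

Theorem theorem2p9 (u : nat -> seqR) (a : nat -> nat) :
  read_data u a ->
  forall x : seqR, in_c0 x -> read_norm u a x = 1 ->
  forall xs : nat -> seqR,
    (forall n, in_c0 (xs n)) ->
    (forall n, read_norm u a (xs n) = 1) ->
    is_lim_seq (fun n => read_norm u a (seq_add x (xs n))) 2 ->
    weak_conv u a xs x.
Proof.
  intros Hd x Hx Hx1 xs Hc Hn1 Hl.
  assert (Hb : forall n, bounded_by 1 (xs n)).
  { intros n. rewrite <- (Hn1 n). apply bounded_by_read_norm; auto. }
  apply (weak_conv_of_coordinatewise u a xs x 1); auto.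
  apply (coordinatewise_lim_of_subseq xs x 1); [exact Hb|].
  intros sigma y Hsigma Hy.
  apply (coordinatewise_limit_eq u a x (fun n => xs (sigma n)) y); auto.
  apply (is_lim_seq_subseq (fun n => read_norm u a (seq_add x (xs n)))); auto.
  apply eventually_subseq, Hsigma.
Qed.
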